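(* Let $K$ be an algebraically closed field of characteristic $2$, and $X=\{F=0\}\subset\mathbb{P}^3_K$ with $F=a_1\sigma_1^4+a_2\sigma_1^2\sigma_2+a_3\sigma_1\sigma_3+a_4\sigma_4+\beta\sigma_2^2$. For a point $x$ put $$f(w)=w^3(a_3\sigma_1)+w^2(a_2+a_3)\sigma_1^2+w\big(a_2\sigma_1^3+a_3(\sigma_3+\sigma_1\sigma_2)\big)+a_4\sigma_4,$$ with the $\sigma_i$ evaluated at $x$; then $x_iF_i(x)=f(x_i)$ for each $i$, so each coordinate of a singular point is a root of $f$. (I) If $a_3=a_4=0$, then $\mathrm{Sing}(X)$ is infinite, since it contains $\{\sigma_1=\sigma_2=0\}$. (II) Assume $X$ normal. If a singular point of $X$ has a coordinate equal to zero and satisfies $\sigma_1=0$, then it has two coordinates equal to zero. (III) Assume $X$ normal. For a singular point $x$, $f$ is not identically zero, unless: $a_4=0$ and $x=(1,1,1,1)$; or $\beta=0$ and $x$ is in the $\mathfrak{S}_4$-orbit of $(0,0,1,1)$; or $a_2=a_3=0$ and $x$ has two coordinates equal to zero. In particular no singular point of $X$ has four pairwise distinct coordinates. (IV) If a singular point $x$ of $X$ has $x_1=x_2=0$, then $a_2\sigma_1^3+a_3(\sigma_3+\sigma_1\sigma_2)=0$ at $x$; and, given this equation, for $i=3,4$ one has $F_i(x)=0\iff \sigma_1x_i\big((a_2+a_3)\sigma_1+a_3x_i\big)=0$. Consequently such a singular point is, up to permutation, either (i) $(0,0,1,1)$; or (ii) $(0,0,0,1)$, and then $a_2=0$ (and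 $a_1=0$); or (iii) a point $(0,0,x_3,x_4)$ with $x_3,x_4\neq0$ and $\sigma_1\neq0$, and then $a_2=a_3=0$ and $a_1(x_3+x_4)^4+\beta(x_3x_4)^2=0$. *)

From HB Require Import structures.
From mathcomp Require Import all_boot all_order all_algebra all_fingroup.
From mathcomp Require Import mpoly.
Set Implicit Arguments. Unset Strict Implicit. Unset Printing Implicit Defensive.
Import Order.TTheory GRing.Theory Num.Theory.
Local Open Scope ring_scope.

Section Quartic.
Variables (K : closedFieldType) (a1 a2 a3 a4 b : K).

Definition sig (k : nat) : {mpoly K[4]} := mesym 4 K k.

Definition Fq : {mpoly K[4]} :=
  a1 *: sig 1 ^+ 4 + a2 *: (sig 1 ^+ 2 * sig 2) + a3 *: (sig 1 * sig 3)
  + a4 *: sig 4 + b *: sig 2 ^+ 2.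

Definition sv (k : nat) (x : 'I_4 -> K) : K := (sig k).@[x].

Definition Fi (i : 'I_4) (x : 'I_4 -> K) : K := (Fq^`M(i)).@[x].

(* x (a nonzero vector of K^4, representing a point of P^3) is a singular
   point of X = {F = 0} *)
Definition sing_pt (x : 'I_4 -> K) : Prop :=
  (exists i, x i != 0) /\ Fq.@[x] = 0 /\ forall i, Fi i x = 0.

Definition sing_finite : Prop :=
  exists (m : nat) (p : 'I_m -> 'I_4 -> K),
    forall x, sing_pt x -> exists j c, c != 0 /\ forall i, x i = c * p j i.

(* X normal: for a hypersurface in P^3 (Serre's criterion: S2 automatic,
   R1 <=> singular locus of codimension >= 2), i.e. Sing(X) finite. *)
Definition X_normal : Prop := sing_finite.

Definition c1 (x : 'I_4 -> K) : K :=
  a2 * sv 1 x ^+ 3 + a3 * (sv 3 x + sv 1 x * sv 2 x).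

Definition fpol (x : 'I_4 -> K) : {poly K} :=
  (a3 * sv 1 x) *: 'X^3 + ((a2 + a3) * sv 1 x ^+ 2) *: 'X^2
  + c1 x *: 'X + (a4 * sv 4 x)%:P.

End Quartic.

Definition proj_eq (K : fieldType) (x y : 'I_4 -> K) : Prop :=
  exists c : K, c != 0 /\ forall i, x i = c * y i.

Definition pt1111 (K : fieldType) : 'I_4 -> K := fun _ => 1.
Definition pt0011 (K : fieldType) : 'I_4 -> K :=
  fun i => if (i < 2)%N then 0 else 1.

Definition in_orbit_0011 (K : fieldType) (x : 'I_4 -> K) : Prop :=
  exists s : 'S_4, proj_eq x (fun i => pt0011 K (s i)).

Definition two_zero (K : fieldType) (x : 'I_4 -> K) : Prop :=
  exists i j : 'I_4, i != j /\ x i = 0 /\ x j = 0.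

(** In characteristic 2 the partial derivatives of F are
      F_i = c_1 + s_1 x_i ((a_2 + a_3) s_1 + a_3 x_i) + a_4 \prod_(j <> i) x_j,
    with c_1 the linear coefficient of f, and x_i \prod_(j <> i) x_j = s_4
    turns x_i F_i into f(x_i).  The rest is a case analysis of this formula
    on the vanishing of s_1, a_3, a_4 and b.  Normality is used only to rule
    out the cases where a whole curve is singular ({s_1 = s_2 = 0} when
    a_3 = a_4 = 0, {s_1 = s_3 = 0} when a_4 = b = 0): finitely many projective
    points cannot realise every ratio x_0 : x_2.  If f = 0 and a_4 = 0 then
    s_1 = s_2 = s_3 = 0, so every x_i is a fourth root of s_4, and the
    Frobenius map is injective; if f <> 0 it has degree at most 3, hence not
    four distinct roots. *)

From HB Require Import structures.
From mathcomp Require Import all_boot all_order all_algebra all_fingroup.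
From mathcomp Require Import mpoly ring.
Set Implicit Arguments.
Unset Strict Implicit.
Unset Printing Implicit Defensive.

Import Order.TTheory GRing.Theory Num.Theory.
Local Open Scope ring_scope.

Notation i0 := (@Ordinal 4 0 isT).
Notation i1 := (@Ordinal 4 1 isT).
Notation i2 := (@Ordinal 4 2 isT).
Notation i3 := (@Ordinal 4 3 isT).

Section SymmetricFunctions.
Variables (R : comNzRingType) (n : nat).

Lemma mderivXU (i j : 'I_n) : ('X_i : {mpoly R[n]})^`M(j) = (i == j)%:R.
Proof.
rewrite mderivX mnm1E; case: eqP => [->|_]; last by rewrite scale0r.
have -> : (U_(j) - U_(j) = 0)%MM by apply/mnmP => k; rewrite mnmBE mnm0E subnn.
by rewrite mpolyX0 scale1r.
Qed.

Lemma mderiv_prodX (i : 'I_n) :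
  (\prod_(j < n) 'X_j : {mpoly R[n]})^`M(i) = \prod_(j | j != i) 'X_j.
Proof.
have dP0 : (\prod_(j | j != i) 'X_j : {mpoly R[n]})^`M(i) = 0.
  apply: (big_ind (fun p : {mpoly R[n]} => p^`M(i) = 0)).
  - by rewrite -mpolyC1 mderivC.
  - by move=> p q dp dq; rewrite mderivM dp dq mul0r mulr0 addr0.
  - by move=> j /negbTE ji; rewrite mderivXU ji.
by rewrite (bigD1 i) //= mderivM dP0 mderivXU eqxx mul1r mulr0 addr0.
Qed.

Lemma meval_mesym (x : 'I_n -> R) k :
  (mesym n R k).@[x] = \sum_(h : {set 'I_n} | #|h| == k) \prod_(i in h) x i.
Proof.
rewrite /mesym raddf_sum; apply: eq_bigr => h _ /=.
by rewrite rmorph_prod; apply: eq_bigr => i _; exact: mevalXU.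
Qed.

Lemma meval_mesym_perm (s : 'S_n) (x : 'I_n -> R) k :
  (mesym n R k).@[fun i => x (s i)] = (mesym n R k).@[x].
Proof.
rewrite !meval_mesym [RHS](reindex_inj (imset_inj (@perm_inj _ s))) /=.
apply: eq_big => [h | h _]; first by rewrite card_imset //; exact: perm_inj.
by rewrite big_imset //= => i j _ _; exact: perm_inj.
Qed.

End SymmetricFunctions.

Lemma lift_inord n (i : 'I_n.+1) (j : 'I_n) : lift i j = inord (bump i j).
Proof. by apply/val_inj; rewrite /= inordK //; exact: (ltn_ord (lift i j)). Qed.

Lemma widen_ord_inord n m (le_nm : (n <= m.+1)%N) (i : 'I_n) :
  widen_ord le_nm i = inord i.
Proof. by apply/val_inj; rewrite /= inordK // (leq_trans (ltn_ord i)). Qed.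

Lemma ord_max_inord n : (ord_max : 'I_n.+1) = inord n.
Proof. by apply/val_inj; rewrite /= inordK. Qed.

Lemma prod_neq_eq0 (R : idomainType) n (x : 'I_n -> R) i k :
  x k = 0 -> k != i -> \prod_(j | j != i) x j = 0.
Proof. by move=> xk ki; apply/eqP/prodf_eq0; exists k => //; rewrite xk. Qed.

Lemma ord4_cases (i : 'I_4) : i = i0 \/ i = i1 \/ i = i2 \/ i = i3.
Proof.
case: i => [[|[|[|[|k]]]] lt_k4] //.
- by left; apply/val_inj.
- by right; left; apply/val_inj.
- by right; right; left; apply/val_inj.
- by right; right; right; apply/val_inj.
Qed.

Lemma ord0_i0 : (ord0 : 'I_4) = i0. Proof. exact/val_inj. Qed.
Lemma inord_i0 : (inord 0 : 'I_4) = i0. Proof. by apply/val_inj; rewrite /= inordK. Qed.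
Lemma inord_i1 : (inord 1 : 'I_4) = i1. Proof. by apply/val_inj; rewrite /= inordK. Qed.
Lemma inord_i2 : (inord 2 : 'I_4) = i2. Proof. by apply/val_inj; rewrite /= inordK. Qed.
Lemma inord_i3 : (inord 3 : 'I_4) = i3. Proof. by apply/val_inj; rewrite /= inordK. Qed.

Ltac ord4_simpl :=
  rewrite ?(widen_ord_inord, ord_max_inord, lift_inord) /= ?inordK //
          ?(ord0_i0, inord_i0, inord_i1, inord_i2, inord_i3).
Ltac case_ord4 i := case: (ord4_cases i) => [->|[->|[->|->]]].

Section FourVariables.
Variable K : closedFieldType.
Implicit Types x : 'I_4 -> K.

Notation X0 := ('X_i0 : {mpoly K[4]}).
Notation X1 := ('X_i1 : {mpoly K[4]}).
Notation X2 := ('X_i2 : {mpoly K[4]}).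
Notation X3 := ('X_i3 : {mpoly K[4]}).

Lemma big_ord4 (R : Type) (idx : R) (op : R -> R -> R) (F : 'I_4 -> R) :
  \big[op/idx]_(i < 4) F i = op (F i0) (op (F i1) (op (F i2) (op (F i3) idx))).
Proof. by rewrite !big_ord_recl big_ord0; ord4_simpl. Qed.

Lemma sig1E : sig K 1 = X0 + X1 + X2 + X3.
Proof. by rewrite /sig mesym1E big_ord4 addr0 !addrA. Qed.

Lemma sig2E : sig K 2 = X0 * X1 + X0 * X2 + X0 * X3 + X1 * X2 + X1 * X3 + X2 * X3.
Proof.
rewrite /sig (mesymSS _ 3 1) (mesymSS _ 2 1) !mesym1E mesymnnE.
rewrite !big_ord_recl !big_ord0 /=.
rewrite !(mwidenD, mwidenM, mwidenX, mnmwiden1, mwiden1, mwiden0) /=.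
ord4_simpl; ring.
Qed.

Lemma sig3E : sig K 3 = X0 * X1 * X2 + X0 * X1 * X3 + X0 * X2 * X3 + X1 * X2 * X3.
Proof.
rewrite /sig (mesymSS _ 3 2) (mesymSS _ 2 1) !mesym1E !mesymnnE.
rewrite !big_ord_recl !big_ord0 /=.
rewrite !(mwidenD, mwidenM, mwidenX, mnmwiden1, mwiden1, mwiden0) /=.
ord4_simpl; ring.
Qed.

Lemma sv1E x : sv 1 x = x i0 + x i1 + x i2 + x i3.
Proof. by rewrite /sv sig1E !(mevalD, mevalXU). Qed.

Lemma sv2E x :
  sv 2 x = x i0 * x i1 + x i0 * x i2 + x i0 * x i3 + x i1 * x i2 + x i1 * x i3 + x i2 * x i3.
Proof. by rewrite /sv sig2E !(mevalD, mevalM, mevalXU). Qed.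

Lemma sv3E x :
  sv 3 x = x i0 * x i1 * x i2 + x i0 * x i1 * x i3 + x i0 * x i2 * x i3 + x i1 * x i2 * x i3.
Proof. by rewrite /sv sig3E !(mevalD, mevalM, mevalXU). Qed.

Lemma sv4E x : sv 4 x = \prod_i x i.
Proof. by rewrite /sv /sig mesymnnE rmorph_prod; apply: eq_bigr => i _; exact: mevalXU. Qed.

Lemma prod_neqE x i :
  \prod_(j | j != i) x j = sv 3 x - x i * sv 2 x + x i ^+ 2 * sv 1 x - x i ^+ 3.
Proof. by rewrite big_mkcond big_ord4 sv1E sv2E sv3E; case_ord4 i => /=; ring. Qed.

Lemma sv4_prod_neq x i : x i * \prod_(j | j != i) x j = sv 4 x.
Proof. by rewrite sv4E [RHS](bigD1 i). Qed.

Lemma coord_root_sv x i :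
  x i ^+ 4 - sv 1 x * x i ^+ 3 + sv 2 x * x i ^+ 2 - sv 3 x * x i + sv 4 x = 0.
Proof. by rewrite -(sv4_prod_neq x i) prod_neqE; ring. Qed.

Lemma mderiv_sig1 i : (sig K 1)^`M(i) = 1.
Proof. by case_ord4 i; rewrite sig1E !mderivD !mderivXU /=; ring. Qed.

Lemma mderiv_sig2 i : (sig K 2)^`M(i) = sig K 1 - 'X_i.
Proof. by case_ord4 i; rewrite sig1E sig2E !mderivD !mderivM !mderivXU /=; ring. Qed.

Lemma mderiv_sig3 i : (sig K 3)^`M(i) = sig K 2 - 'X_i * sig K 1 + 'X_i ^+ 2.
Proof. by case_ord4 i; rewrite sig1E sig2E sig3E !mderivD !mderivM !mderivXU /=; ring. Qed.

Lemma meval_mderiv_sig4 x i : ((sig K 4)^`M(i)).@[x] = \prod_(j | j != i) x j.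
Proof.
by rewrite /sig mesymnnE mderiv_prodX rmorph_prod; apply: eq_bigr => j _; exact: mevalXU.
Qed.

Lemma two_zero_prod_neq_eq0 x :
  (forall i, \prod_(j | j != i) x j = 0) -> two_zero x.
Proof.
move=> prod0; have zero_other i : exists2 k, k != i & x k == 0.
  by apply/prodf_eq0; rewrite prod0.
have [k _ /eqP xk] := zero_other i0; have [l lk /eqP xl] := zero_other k.
by exists l, k.
Qed.

Lemma sv2_orbit_0011 u (s : 'S_4) : sv 2 (fun i => u * pt0011 K (s i)) = u ^+ 2.
Proof.
rewrite /sv /sig (meval_mesym_perm s (fun i => u * pt0011 K i)) -/(sv 2 _).
by rewrite sv2E /pt0011 /=; ring.
Qed.

End FourVariables.

Lemma finite_proj_points_avoid_ratio (K : closedFieldType) n (i j : 'I_n) m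
    (p : 'I_m -> 'I_n -> K) (P : ('I_n -> K) -> Prop) :
  (forall x, P x -> exists k c, c != 0 /\ forall l, x l = c * p k l) ->
  exists t, forall y, P y -> y j = 1 -> y i != t.
Proof.
move=> Pfin; pose ratio k := p k i / p k j.
have /closed_nonrootP [t rt] : \prod_(k < m) ('X - (ratio k)%:P) != 0.
  by rewrite monic_neq0 // monic_prod // => k _; exact: monicXsubC.
exists t => y Py yj1; apply: contraNneq rt => yit.
have [k [c [c0 yE]]] := Pfin y Py.
have pkj : p k j = c^-1 by rewrite -(mulKf c0 (p k j)) -yE yj1 mulr1.
rewrite /root horner_prod; apply/prodf_eq0; exists k => //.
by rewrite hornerXsubC /ratio pkj invrK mulrC -yE yit subrr.
Qed.

Lemma perm_pair (T : finType) (a b k l : T) :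
  a != b -> k != l -> exists s : {perm T}, s a = k /\ s b = l.
Proof.
move=> ab kl; exists (tperm a k * tperm (tperm a k b) l)%g.
have bk : tperm a k b != k.
  by apply: contraNneq ab => bk; rewrite -(perm_inj (etrans bk (esym (tpermL a k)))).
split; last by rewrite permM tpermL.
by rewrite permM tpermL tpermD // eq_sym.
Qed.

Section Quartic.
Variables (K : closedFieldType) (hK : 2 \in [pchar K]) (a1 a2 a3 a4 b : K).
Implicit Types x : 'I_4 -> K.

Local Notation sing := (sing_pt a1 a2 a3 a4 b).
Local Notation F_ := (Fi a1 a2 a3 a4 b).
Local Notation c1 := (c1 a2 a3).
Local Notation f := (fpol a2 a3 a4).

Lemma addr_mul2_pchar2 (u q : K) : u + 2%:R * q = u.
Proof. by rewrite (pcharf0 hK) mul0r addr0. Qed.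

Lemma add_eq0_pchar2 (u v : K) : u + v = 0 -> u = v.
Proof. by move/eqP; rewrite addr_eq0 (oppr_pchar2 hK) => /eqP. Qed.

Lemma expr4_inj_pchar2 (u v : K) : u ^+ 4 = v ^+ 4 -> u = v.
Proof.
move=> uv; apply: add_eq0_pchar2; apply/eqP.
suff: (u + v) ^+ 4 == 0 by rewrite expf_eq0.
rewrite exprDn_pchar ?uv ?(addrr_pchar2 hK) //.
by rewrite (eq_pnat _ (pcharf_eq hK)).
Qed.

Lemma Fq_eval x :
  (Fq a1 a2 a3 a4 b).@[x] = a1 * sv 1 x ^+ 4 + a2 * (sv 1 x ^+ 2 * sv 2 x)
    + a3 * (sv 1 x * sv 3 x) + a4 * sv 4 x + b * sv 2 x ^+ 2.
Proof. by rewrite /Fq !(mevalD, mevalZ, mevalM, rmorphXn). Qed.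

Lemma Fi_eval x i :
  F_ i x = c1 x + sv 1 x * x i * ((a2 + a3) * sv 1 x + a3 * x i)
           + a4 * \prod_(j | j != i) x j.
Proof.
rewrite /Fi /Fq !(exprS, expr0, mulr1) !(mderivD, mderivZ, mderivM).
rewrite mderiv_sig1 mderiv_sig2 mderiv_sig3.
rewrite !(mevalD, mevalB, mevalN, mevalZ, mevalM, mevalXU, meval1, rmorphXn).
rewrite meval_mderiv_sig4 /c1 -!/(sv _ x).
(* the derivative computed over the integers exceeds the claimed value by 2 q *)
pose q := 2%:R * a1 * sv 1 x ^+ 3 + a2 * sv 1 x * sv 2 x
          - (a2 + a3) * sv 1 x ^+ 2 * x i + b * sv 2 x * (sv 1 x - x i).
by rewrite -[RHS](addr_mul2_pchar2 _ q) /q; ring.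
Qed.

Lemma Fi_root_fpol x i : x i * F_ i x = (f x).[x i].
Proof.
rewrite Fi_eval /fpol !(hornerD, hornerZ, hornerXn, hornerX, hornerC).
by rewrite -(sv4_prod_neq x i); ring.
Qed.

Lemma Fi_sv1_eq0 x i :
  sv 1 x = 0 -> F_ i x = a3 * sv 3 x + a4 * \prod_(j | j != i) x j.
Proof. by move=> s1; rewrite Fi_eval /c1 s1; ring. Qed.

Lemma Fi_zero_coord x i k :
  x k = 0 -> k != i ->
  F_ i x = c1 x + sv 1 x * x i * ((a2 + a3) * sv 1 x + a3 * x i).
Proof. by move=> xk ki; rewrite Fi_eval (prod_neq_eq0 xk ki) mulr0 addr0. Qed.

Lemma sing_infinite :
  (forall t, exists y, [/\ sing y, y i2 = 1 & y i0 = t]) -> ~ sing_finite a1 a2 a3 a4 b.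
Proof.
move=> line [m [p sing_fin]]; have [t avoid_t] := finite_proj_points_avoid_ratio i0 i2 sing_fin.
by have [y [Sy y2 y0]] := line t; move: (avoid_t y Sy y2); rewrite y0 eqxx.
Qed.

Lemma sing_sv1_sv2_eq0 x :
  a3 = 0 -> a4 = 0 -> (exists i, x i != 0) -> sv 1 x = 0 -> sv 2 x = 0 -> sing x.
Proof.
move=> a30 a40 nz s1 s2; split=> //; split; first by rewrite Fq_eval s1 s2 a30 a40; ring.
by move=> i; rewrite Fi_sv1_eq0 // a30 a40; ring.
Qed.

Lemma sing_infinite_a3_a4_eq0 : a3 = 0 -> a4 = 0 -> ~ sing_finite a1 a2 a3 a4 b.
Proof.
move=> a30 a40; apply: sing_infinite => t.
(* on (t : r : 1 : -(t + r + 1)) one has s_2 = -(r^2 + (t + 1) r + t^2 + t + 1) *)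
have [r r_root] := @solve_monicpoly K 2
  (fun k => if k == 0%N then - (t ^+ 2 + t + 1) else - (t + 1)) isT.
rewrite !big_ord_recl big_ord0 /bump /= in r_root.
exists (fun i => [:: t; r; 1; - (t + r + 1)]`_i); split=> //.
apply: sing_sv1_sv2_eq0 => //; first by exists i2; rewrite oner_eq0.
  by rewrite sv1E /=; ring.
by rewrite sv2E /= -oppr0 -(subrr (r ^+ 2)) {2}r_root; ring.
Qed.

Lemma sing_two_zero_sv1_eq0 x :
  X_normal a1 a2 a3 a4 b -> sing x -> (exists i, x i = 0) -> sv 1 x = 0 ->
  two_zero x.
Proof.
move=> normal [_ [_ dF]] [i xi] s1.
have a3s3 : a3 * sv 3 x = 0.
  by rewrite -(dF (lift i ord0)) Fi_sv1_eq0 // (prod_neq_eq0 xi) ?neq_lift ?mulr0 ?addr0.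
have Pi : \prod_(j | j != i) x j = sv 3 x by rewrite prod_neqE xi; ring.
have a4s3 : a4 * sv 3 x = 0 by rewrite -Pi -(dF i) Fi_sv1_eq0 // a3s3 add0r.
have s3 : sv 3 x = 0.
  have [//|s3] := eqVneq (sv 3 x) 0; case: (sing_infinite_a3_a4_eq0 _ _ normal).
    by apply: (mulIf s3); rewrite mul0r.
  by apply: (mulIf s3); rewrite mul0r.
have /prodf_eq0 [k ki /eqP xk] : \prod_(j | j != i) x j == 0 by rewrite Pi s3.
by exists k, i.
Qed.

Lemma sing_sv1_sv3_eq0 x :
  a4 = 0 -> b = 0 -> (exists i, x i != 0) -> sv 1 x = 0 -> sv 3 x = 0 -> sing x.
Proof.
move=> a40 b0 nz s1 s3; split=> //; split; first by rewrite Fq_eval s1 a40 b0; ring.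
by move=> i; rewrite Fi_sv1_eq0 // s3 a40; ring.
Qed.

Lemma sing_infinite_a4_b_eq0 : a4 = 0 -> b = 0 -> ~ sing_finite a1 a2 a3 a4 b.
Proof.
move=> a40 b0; apply: sing_infinite => t.
exists (fun i => [:: t; - t; 1; -1]`_i); split=> //.
apply: sing_sv1_sv3_eq0 => //; first by exists i2; rewrite oner_eq0.
  by rewrite sv1E /=; ring.
by rewrite sv3E /=; ring.
Qed.

Lemma fpol_eq0 x :
  f x = 0 -> [/\ a3 * sv 1 x = 0, (a2 + a3) * sv 1 x ^+ 2 = 0 & c1 x = 0].
Proof.
move=> f0; have coef k := congr1 (fun p : {poly K} => p`_k) f0.
by split; [move: (coef 3%N) | move: (coef 2%N) | move: (coef 1%N)];
  rewrite /fpol !(coefD, coefZ, coefXn, coefX, coefC, coef0) /= !(mulr1, mulr0, addr0, add0r).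
Qed.

Lemma size_fpol x : (size (f x) <= 4)%N.
Proof.
apply/leq_sizeP => -[|[|[|[|j]]]] // _.
by rewrite /fpol !(coefD, coefZ, coefXn, coefX, coefC) /= !(mulr0, addr0).
Qed.

Lemma orbit_0011_zero_pair x k l :
  k != l -> x k = 0 -> x l = 0 -> sv 1 x = 0 -> (exists i, x i != 0) ->
  exists u (s : 'S_4), u != 0 /\ forall i, x i = u * pt0011 K (s i).
Proof.
move=> kl xk xl s1 [i xi].
have [s [sk sl]] := @perm_pair _ i0 i1 k l isT kl.
pose y j := x (s j).
have y0 : y i0 = 0 by rewrite /y sk.
have y1 : y i1 = 0 by rewrite /y sl.
have y23 : y i2 = y i3.
  have sy1 : sv 1 y = 0 by rewrite -s1; exact: meval_mesym_perm.
  by apply: add_eq0_pchar2; move: sy1; rewrite sv1E y0 y1 !add0r.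
have xE j : x j = y (s^-1 j)%g by rewrite /y permKV.
exists (y i2), (s^-1)%g; split.
  apply: contraNneq xi => y20; rewrite xE.
  by case: (ord4_cases (s^-1 i)%g) => [->|[->|[->|->]]]; rewrite ?y0 ?y1 -?y23 ?y20 eqxx.
move=> j; rewrite xE.
by case: (ord4_cases (s^-1 j)%g) => [->|[->|[->|->]]]; rewrite /pt0011 /= ?mulr0 ?mulr1.
Qed.

Lemma sing_two_zero_a2_a3_eq0 x :
  X_normal a1 a2 a3 a4 b -> a2 = 0 -> a3 = 0 -> sing x -> two_zero x.
Proof.
move=> normal a20 a30 [_ [_ dF]].
have a4n0 : a4 != 0 by apply/eqP => a40; exact: sing_infinite_a3_a4_eq0 a30 a40 normal.
apply: two_zero_prod_neq_eq0 => i; apply: (mulfI a4n0).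
by rewrite mulr0 -(dF i) Fi_eval /c1 a20 a30; ring.
Qed.

Lemma sing_orbit_0011 x :
  a4 != 0 -> sing x -> sv 1 x = 0 -> a3 * sv 3 x = 0 -> b = 0 /\ in_orbit_0011 x.
Proof.
move=> a4n0 [nz [F0 dF]] s1 a3s3.
have [k [l [kl [xk xl]]]] : two_zero x.
  apply: two_zero_prod_neq_eq0 => i; apply: (mulfI a4n0).
  by rewrite mulr0 -(dF i) Fi_sv1_eq0 // a3s3 add0r.
have [u [s [u0 xE]]] := orbit_0011_zero_pair kl xk xl s1 nz.
split; last by exists s, u.
have s2 : sv 2 x = u ^+ 2 by rewrite -(sv2_orbit_0011 u s); exact: meval_eq.
have s4 : sv 4 x = 0 by rewrite -(sv4_prod_neq x k) xk mul0r.
by apply: (mulIf (expf_neq0 4 u0)); rewrite mul0r -F0 Fq_eval s1 s2 s4; ring.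
Qed.

Lemma sing_proj_1111 x :
  X_normal a1 a2 a3 a4 b -> a4 = 0 -> sing x -> sv 1 x = 0 -> a3 * sv 3 x = 0 ->
  proj_eq x (pt1111 K).
Proof.
move=> normal a40 [[i xi] [F0 dF]] s1 a3s3.
have a3n0 : a3 != 0 by apply/eqP => a30; exact: sing_infinite_a3_a4_eq0 a30 a40 normal.
have s3 : sv 3 x = 0 by apply: (mulfI a3n0); rewrite mulr0.
have bn0 : b != 0 by apply/eqP => b0; exact: sing_infinite_a4_b_eq0 a40 b0 normal.
have s2 : sv 2 x = 0.
  apply/eqP; suff /eqP : sv 2 x ^+ 2 = 0 by rewrite expf_eq0.
  by apply: (mulfI bn0); rewrite mulr0 -F0 Fq_eval s1 a40; ring.
have x4 j : x j ^+ 4 = - sv 4 x.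
  by apply/eqP; rewrite -addr_eq0 -(coord_root_sv x j) s1 s2 s3; apply/eqP; ring.
by exists (x i); split=> // j; rewrite /pt1111 mulr1; apply: expr4_inj_pchar2; rewrite !x4.
Qed.

Lemma sing_fpol_eq0 x :
  X_normal a1 a2 a3 a4 b -> sing x -> f x = 0 ->
  (a4 = 0 /\ proj_eq x (pt1111 K)) \/ (b = 0 /\ in_orbit_0011 x) \/
  (a2 = 0 /\ a3 = 0 /\ two_zero x).
Proof.
move=> normal Sx /fpol_eq0 [a3s1 a23s1 c10].
have [s1|s1] := eqVneq (sv 1 x) 0.
  have a3s3 : a3 * sv 3 x = 0 by rewrite -c10 /c1 s1; ring.
  have [a40|a4n0] := eqVneq a4 0; first by left; split; last exact: sing_proj_1111.
  by right; left; exact: sing_orbit_0011.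
have a30 : a3 = 0 by apply: (mulIf s1); rewrite mul0r.
have a20 : a2 = 0.
  by apply: (mulIf (expf_neq0 2 s1)); rewrite mul0r -a23s1 a30 addr0.
by right; right; do 2 split=> //; exact: sing_two_zero_a2_a3_eq0.
Qed.

Lemma sing_coords_not_distinct x :
  X_normal a1 a2 a3 a4 b -> sing x -> ~ (forall i j, i != j -> x i != x j).
Proof.
move=> normal Sx distinct; have [f0|fn0] := eqVneq (f x) 0.
  case: (sing_fpol_eq0 normal Sx f0) => [[_ [c [_ xE]]]|[[_ [s [c [_ xE]]]]|]].
  - by move: (distinct i0 i1 isT); rewrite !xE eqxx.
  - have := distinct (s^-1 i0)%g (s^-1 i1)%g; rewrite (inj_eq perm_inj) => /(_ isT).
    by rewrite !xE !permKV /pt0011 /= !mulr0 eqxx.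
  - by move=> [_ [_ [i [j [ij [xi xj]]]]]]; move: (distinct i j ij); rewrite xi xj eqxx.
have roots : all (root (f x)) [:: x i0; x i1; x i2; x i3].
  by case: Sx => _ [_ dF]; rewrite /= /root -!Fi_root_fpol !dF !mulr0 eqxx.
have uniq_x : uniq [:: x i0; x i1; x i2; x i3] by rewrite /= !inE !negb_or !distinct.
by have := leq_trans (max_poly_roots fn0 roots uniq_x) (size_fpol x).
Qed.

Lemma c1_zero_pair x : sing x -> x i0 = 0 -> x i1 = 0 -> c1 x = 0.
Proof.
by move=> [_ [_ dF]] x0 x1; rewrite -(dF i0) (@Fi_zero_coord _ _ i1) // x0 mulr0 mul0r addr0.
Qed.

Lemma Fi_zero_pair_eq0 x i :
  x i0 = 0 -> x i1 = 0 -> c1 x = 0 -> (i = i2 \/ i = i3) ->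
  (F_ i x = 0 <-> sv 1 x * x i * ((a2 + a3) * sv 1 x + a3 * x i) = 0).
Proof.
by move=> x0 x1 c10 [->|->]; rewrite (@Fi_zero_coord _ _ i0) // c10 add0r.
Qed.

Lemma zero_pair_solutions (u v : K) :
  (u != 0) || (v != 0) ->
  a2 * (u + v) ^+ 3 + a3 * (u + v) * (u * v) = 0 ->
  a1 * (u + v) ^+ 4 + a2 * (u + v) ^+ 2 * (u * v) + b * (u * v) ^+ 2 = 0 ->
  (u + v) * u * ((a2 + a3) * (u + v) + a3 * u) = 0 ->
  (u + v) * v * ((a2 + a3) * (u + v) + a3 * v) = 0 ->
  (u = v /\ u != 0) \/ ((u = 0 \/ v = 0) /\ a2 = 0 /\ a1 = 0) \/
  (u != 0 /\ v != 0 /\ u + v != 0 /\ a2 = 0 /\ a3 = 0 /\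
   a1 * (u + v) ^+ 4 + b * (u * v) ^+ 2 = 0).
Proof.
move=> nz c10 F0 dFu dFv; have [s0|sn0] := eqVneq (u + v) 0.
  by left; have uv := add_eq0_pchar2 s0; split=> //; move: nz; rewrite -uv orbb.
right; have one_zero : u * v = 0 -> a2 = 0 /\ a1 = 0.
  move=> uv0; rewrite uv0 in c10 F0.
  have a20 : a2 = 0 by apply: (mulIf (expf_neq0 3 sn0)); rewrite mul0r -c10; ring.
  by split=> //; apply: (mulIf (expf_neq0 4 sn0)); rewrite mul0r -F0 a20; ring.
have [u0|un0] := eqVneq u 0; first by left; split; [left | apply: one_zero; rewrite u0 mul0r].
have [v0|vn0] := eqVneq v 0; first by left; split; [right | apply: one_zero; rewrite v0 mulr0].
have Gu : (a2 + a3) * (u + v) + a3 * u = 0.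
  by apply: (mulfI (mulf_neq0 sn0 un0)); rewrite mulr0.
have Gv : (a2 + a3) * (u + v) + a3 * v = 0.
  by apply: (mulfI (mulf_neq0 sn0 vn0)); rewrite mulr0.
have a30 : a3 = 0.
  apply: (mulIf sn0); rewrite mul0r -(GRing.subr_pchar2 hK) -[RHS](subrr 0) -{1}Gu -Gv; ring.
have a20 : a2 = 0 by apply: (mulIf sn0); rewrite mul0r -Gu a30; ring.
by right; do 5 split=> //; rewrite -F0 a20; ring.
Qed.

Lemma sing_zero_pair x :
  sing x -> x i0 = 0 -> x i1 = 0 ->
  (x i2 = x i3 /\ x i2 != 0) \/
  ((x i2 = 0 \/ x i3 = 0) /\ a2 = 0 /\ a1 = 0) \/
  (x i2 != 0 /\ x i3 != 0 /\ sv 1 x != 0 /\ a2 = 0 /\ a3 = 0 /\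
   a1 * (x i2 + x i3) ^+ 4 + b * (x i2 * x i3) ^+ 2 = 0).
Proof.
move=> Sx x0 x1; have c10 := c1_zero_pair Sx x0 x1; case: Sx => [[i xi] [F0 dF]].
have s1 : sv 1 x = x i2 + x i3 by rewrite sv1E x0 x1 !add0r.
have s2 : sv 2 x = x i2 * x i3 by rewrite sv2E x0 x1; ring.
have s3 : sv 3 x = 0 by rewrite sv3E x0 x1; ring.
have s4 : sv 4 x = 0 by rewrite -(sv4_prod_neq x i0) x0 mul0r.
rewrite s1; apply: zero_pair_solutions.
- by move: xi; case_ord4 i; rewrite ?x0 ?x1 ?eqxx // => ->; rewrite ?orbT.
- by rewrite -c10 /c1 s1 s2 s3; ring.
- by rewrite -F0 Fq_eval s1 s2 s3 s4; ring.
- by rewrite -s1 -(dF i2) (@Fi_zero_coord _ _ i0) // c10 add0r.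
- by rewrite -s1 -(dF i3) (@Fi_zero_coord _ _ i0) // c10 add0r.
Qed.

End Quartic.

Theorem lemma4p3 (K : closedFieldType) (hK : (2 \in [pchar K])%N)
    (a1 a2 a3 a4 b : K) :
  let Sg := sing_pt a1 a2 a3 a4 b in
  let f := fpol a2 a3 a4 in
  (* x_i F_i(x) = f(x_i) *)
  (forall (x : 'I_4 -> K) (i : 'I_4),
      x i * Fi a1 a2 a3 a4 b i x = (f x).[x i]) /\
  (* (I) *)
  (a3 = 0 -> a4 = 0 ->
     (forall x : 'I_4 -> K, (exists i, x i != 0) ->
        sv 1 x = 0 -> sv 2 x = 0 -> Sg x) /\
     ~ sing_finite a1 a2 a3 a4 b) /\
  (* (II) *)
  (X_normal a1 a2 a3 a4 b ->
     forall x : 'I_4 -> K, Sg x -> (exists i, x i = 0) -> sv 1 x = 0 ->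
       two_zero x) /\
  (* (III) *)
  (X_normal a1 a2 a3 a4 b ->
     (forall x : 'I_4 -> K, Sg x -> f x = 0 ->
        (a4 = 0 /\ proj_eq x (pt1111 K)) \/
        (b = 0 /\ in_orbit_0011 x) \/
        (a2 = 0 /\ a3 = 0 /\ two_zero x)) /\
     (forall x : 'I_4 -> K, Sg x ->
        ~ (forall i j : 'I_4, i != j -> x i != x j))) /\
  (* (IV) *)
  (let i0 := @Ordinal 4 0 isT in let i1 := @Ordinal 4 1 isT in
   let i2 := @Ordinal 4 2 isT in let i3 := @Ordinal 4 3 isT in
   (forall x : 'I_4 -> K, Sg x -> x i0 = 0 -> x i1 = 0 ->
      c1 a2 a3 x = 0) /\
   (forall x : 'I_4 -> K, x i0 = 0 -> x i1 = 0 -> c1 a2 a3 x = 0 ->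
      forall i, (i = i2 \/ i = i3) ->
      (Fi a1 a2 a3 a4 b i x = 0 <->
       sv 1 x * x i * ((a2 + a3) * sv 1 x + a3 * x i) = 0)) /\
   (forall x : 'I_4 -> K, Sg x -> x i0 = 0 -> x i1 = 0 ->
      (x i2 = x i3 /\ x i2 != 0) \/
      ((x i2 = 0 \/ x i3 = 0) /\ a2 = 0 /\ a1 = 0) \/
      (x i2 != 0 /\ x i3 != 0 /\ sv 1 x != 0 /\ a2 = 0 /\ a3 = 0 /\
       a1 * (x i2 + x i3) ^+ 4 + b * (x i2 * x i3) ^+ 2 = 0))).
Proof.
move=> Sg f; rewrite {}/Sg {}/f; split; first exact: Fi_root_fpol.
split.
  move=> a30 a40; split=> [x|]; first exact: sing_sv1_sv2_eq0.
  exact: sing_infinite_a3_a4_eq0.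
split; first by move=> normal x; exact: sing_two_zero_sv1_eq0.
split; first by move=> normal; split=> x; [exact: sing_fpol_eq0 | exact: sing_coords_not_distinct].
split; first by move=> x; exact: c1_zero_pair.
split; first by move=> x x0 x1 c10 i; exact: Fi_zero_pair_eq0.
by move=> x; exact: sing_zero_pair.
Qed.
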